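(* Let $n\ge1$, let $\{e_1,\dots,e_n\}$ be a basis of a real vector space $X$, let $V=\{0,e_1,\dots,e_n\}$ and let $T=(V,E,0)$ be a tree on $V$ rooted at $0$. Suppose that $a,b\in\mathbb R^n$ and $c\in(\mathbb R\setminus\{0\})^n$ satisfy \[\sum_{i=1}^na_ie_i=\sum_{i=1}^nb_i\frac{e_i-\mathrm{pred}_T(e_i)}{c_i}.\] Then $b_i=c_i\sum_{\{j:\,e_j\in V_{e_i}^T\}}a_j$ for every $i=1,\dots,n$.
   Context: For a tree $T$ on a finite vertex set rooted at $0$ and a vertex $v\ne0$, $\mathrm{pred}_T(v)$ is the neighbour of $v$ on the unique path from $v$ to $0$ (here vertices are vectors, $0$ the zero vector), and $V_v^T$ is the vertex set of the subtree rooted at $v$, i.e. $v$ together with all vertices whose path to $0$ passes through $v$. *)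

From HB Require Import structures.
From mathcomp Require Import all_boot all_order all_algebra.
From mathcomp Require Import reals.
From Stdlib Require Import ClassicalEpsilon.
Set Implicit Arguments. Unset Strict Implicit. Unset Printing Implicit Defensive.
Import Order.TTheory GRing.Theory Num.Theory.
Local Open Scope ring_scope.

(* Vertices of V = {0, e_1, ..., e_n} are encoded by 'I_n.+1:
   ord0 is the zero vector (the root), lift ord0 i is e_(i+1) (= tnth e i). *)
Definition root {n : nat} : 'I_n.+1 := ord0.

Definition tree_path {n : nat} (E : rel 'I_n.+1) (x y : 'I_n.+1)
  (p : seq 'I_n.+1) : bool :=
  [&& path E x p, uniq (x :: p) & last x p == y].

Definition is_tree {n : nat} (E : rel 'I_n.+1) : Prop :=
  symmetric E /\ irreflexive E /\
  forall x y : 'I_n.+1, exists! p, tree_path E x y p.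

Definition is_pred {n : nat} (E : rel 'I_n.+1) (v u : 'I_n.+1) : Prop :=
  exists p, tree_path E v root (u :: p).

Definition tpred {n : nat} (E : rel 'I_n.+1) (v : 'I_n.+1) : 'I_n.+1 :=
  epsilon (inhabits root) (is_pred E v).

Definition in_subtree {n : nat} (E : rel 'I_n.+1) (v w : 'I_n.+1) : Prop :=
  exists p, tree_path E w root p /\ v \in w :: p.

Definition pbool (P : Prop) : bool :=
  if excluded_middle_informative P then true else false.

Definition vtx {R : fieldType} {X : vectType R} {n : nat} (e : n.-tuple X)
  (v : 'I_n.+1) : X :=
  match unlift ord0 v with None => 0 | Some j => tnth e j end.

From Pilot Require Import Defs.
From HB Require Import structures.
From mathcomp Require Import all_boot all_order all_algebra.
From mathcomp Require Import reals.
From Stdlib Require Import ClassicalEpsilon.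
Import Order.TTheory GRing.Theory Num.Theory.
Local Open Scope ring_scope.

(* Reading off the coordinate of e_j in the hypothesis gives, with
   beta_i = b_i / c_i, that a_j = beta_j - sum of beta_i over the children e_i
   of e_j.  Summed over the subtree of e_k, each beta_i with e_i a proper
   descendant of e_k occurs once with each sign, because its parent is again
   in the subtree; only beta_k survives. *)

Section RootPaths.

Context {n : nat} {E : rel 'I_n.+1}.
Hypothesis root_path_unique : forall w, exists! p, tree_path E w Defs.root p.

Lemma exists_root_path (w : 'I_n.+1) : exists p, tree_path E w Defs.root p.
Proof. by have [p [hp _]] := root_path_unique w; exists p. Qed.

Definition root_path (w : 'I_n.+1) : seq 'I_n.+1 := xchoose (exists_root_path w).

Lemma root_pathP (w : 'I_n.+1) : tree_path E w Defs.root (root_path w).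
Proof. exact: xchooseP. Qed.

Lemma tree_path_rootE {w : 'I_n.+1} {p : seq 'I_n.+1} :
  tree_path E w Defs.root p -> p = root_path w.
Proof.
have [q [_ q_uniq]] := root_path_unique w.
by move=> hp; rewrite -(q_uniq _ hp) -(q_uniq _ (root_pathP w)).
Qed.

Lemma root_path_root : root_path Defs.root = [::].
Proof. by apply/esym/tree_path_rootE; rewrite /tree_path /= eqxx. Qed.

Lemma root_path_tpred {v : 'I_n.+1} :
  v != Defs.root -> root_path v = tpred E v :: root_path (tpred E v).
Proof.
move=> v_nroot.
have ex_pred : exists u, is_pred E v u.
  case: (root_path v) (root_pathP v) => [|u q] hp; last by exists u, q.
  by move: hp; rewrite /tree_path /= => /eqP v_root; rewrite v_root eqxx in v_nroot.
have [q hq] := epsilon_spec (inhabits Defs.root) (is_pred E v) ex_pred.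
rewrite -/(tpred E v) in hq; rewrite -(tree_path_rootE hq).
congr (_ :: _); apply: tree_path_rootE.
by move: hq; rewrite /tree_path /= => /and3P[/andP[_ ->] /andP[_ ->] ->].
Qed.

Lemma in_subtreeE (v w : 'I_n.+1) :
  pbool (in_subtree E v w) = (v \in w :: root_path w).
Proof.
rewrite /pbool; case: excluded_middle_informative => [[p [hp v_in]]|not_in].
  by rewrite -(tree_path_rootE hp).
by apply/esym/negP => v_in; apply: not_in; exists (root_path w); rewrite root_pathP.
Qed.

Lemma in_subtree_refl (v : 'I_n.+1) : pbool (in_subtree E v v).
Proof. by rewrite in_subtreeE mem_head. Qed.

Lemma in_subtree_root (v : 'I_n.+1) :
  v != Defs.root -> pbool (in_subtree E v Defs.root) = false.
Proof. by rewrite in_subtreeE root_path_root inE => /negbTE. Qed.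

Lemma in_subtree_tpred (v w : 'I_n.+1) : w != Defs.root ->
  pbool (in_subtree E v (tpred E w)) = pbool (in_subtree E v w) && (v != w).
Proof.
move=> w_nroot; rewrite !in_subtreeE -(root_path_tpred w_nroot) in_cons.
have /and3P[_ w_uniq _] := root_pathP w.
case: (eqVneq v w) => [->|_] /=; last by rewrite andbT.
by move: w_uniq; rewrite cons_uniq => /andP[/negbTE].
Qed.

End RootPaths.

Section BasisCoordinates.

Context {R : fieldType} {X : vectType R} {n : nat} {e : n.-tuple X}.
Hypothesis e_free : free e.

Lemma coord_tnth (i j : 'I_n) : coord e j (tnth e i) = (i == j)%:R.
Proof. by rewrite (tnth_nth 0) coord_free. Qed.

Lemma coord_vtx (j : 'I_n) (v : 'I_n.+1) :
  coord e j (vtx e v) = (v == lift ord0 j)%:R.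
Proof.
rewrite /vtx; case: (unliftP ord0 v) => [i ->|->].
  by rewrite coord_tnth (inj_eq lift_inj).
by rewrite linear0 (negbTE (neq_lift _ _)).
Qed.

Lemma coord_sum_edges {p : 'I_n -> 'I_n.+1} {a beta : 'I_n -> R} :
  \sum_(i < n) a i *: tnth e i = \sum_(i < n) beta i *: (tnth e i - vtx e (p i)) ->
  forall j, a j = beta j - \sum_(i | p i == lift ord0 j) beta i.
Proof.
move=> hsum j; have := congr1 (coord e j) hsum; rewrite !linear_sum /=.
have pick_j (F : 'I_n -> R) : \sum_(i < n) F i * (i == j)%:R = F j.
  by rewrite (bigD1 j) //= eqxx mulr1 big1 ?addr0 // => i /negbTE ->; rewrite mulr0.
under eq_bigr do rewrite linearZ /= coord_tnth.
under [X in _ = X -> _]eq_bigr do rewrite linearZ linearB /= coord_tnth coord_vtx mulrBr.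
rewrite sumrB !pick_j => ->; congr (_ - _).
by rewrite [RHS]big_mkcond; apply: eq_bigr => i _; rewrite mulr_natr mulrb.
Qed.

End BasisCoordinates.

Lemma sum_subtree_telescope {R : zmodType} {n : nat} (p : 'I_n -> 'I_n.+1)
    (A : pred 'I_n.+1) (k : 'I_n) (beta : 'I_n -> R) :
  ~~ A ord0 -> A (lift ord0 k) -> (forall i, A (p i) = A (lift ord0 i) && (i != k)) ->
  \sum_(j : 'I_n | A (lift ord0 j)) (beta j - \sum_(i | p i == lift ord0 j) beta i) = beta k.
Proof.
move=> A_root A_k A_p.
have inner i : \sum_(j : 'I_n | A (lift ord0 j) && (p i == lift ord0 j)) beta i
               = if A (p i) then beta i else 0.
  case: (unliftP ord0 (p i)) => [j0 ->|->]; last first.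
    by rewrite (negbTE A_root) big_pred0 // => j; rewrite (negbTE (neq_lift _ _)) andbF.
  have lift_j0 j : (lift ord0 j0 == lift ord0 j) = (j == j0).
    by rewrite (inj_eq lift_inj) eq_sym.
  by under eq_bigl do rewrite lift_j0 andbC; rewrite big_mkcondr big_pred1_eq.
rewrite sumrB (exchange_big_dep xpredT) //=.
under [X in _ - X]eq_bigr do rewrite inner.
by rewrite -big_mkcond (bigD1 k) //= (eq_bigl _ _ A_p) addrK.
Qed.

Theorem lemma2p6 (R : realType) (X : vectType R) (n : nat) (hn : (0 < n)%N)
  (e : n.-tuple X) (he : basis_of fullv e)
  (E : rel 'I_n.+1) (hT : is_tree E)
  (a b c : 'I_n -> R) (hc : forall i, c i != 0)
  (hsum : \sum_(i < n) a i *: tnth e i =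
          \sum_(i < n) (b i / c i) *: (tnth e i - vtx e (tpred E (lift ord0 i)))) :
  forall i : 'I_n,
    b i = c i * \sum_(j < n | pbool (in_subtree E (lift ord0 i) (lift ord0 j))) a j.
Proof.
move=> k.
have root_path_unique w : exists! p, tree_path E w Defs.root p.
  by case: hT => _ [_]; apply.
have lift_nroot j : lift ord0 j != Defs.root by rewrite eq_sym neq_lift.
have a_coord := coord_sum_edges (p := fun i => tpred E (lift ord0 i)) (basis_free he) hsum.
rewrite (eq_bigr _ (fun j _ => a_coord j))
        (sum_subtree_telescope _ (fun w => pbool (in_subtree E (lift ord0 k) w))
           k (fun i => b i / c i)).
- by rewrite mulrC divfK.
- by rewrite in_subtree_root.
- exact: in_subtree_refl.
- by move=> i; rewrite in_subtree_tpred // (inj_eq lift_inj) eq_sym.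
Qed.
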